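(* Let $\widetilde{A}=(\widetilde a_{ij})$ be a real symmetric $N\times N$ matrix with nonnegative entries and zero diagonal ($\widetilde a_{jj}=0$ for all $j$), let $\widetilde d_j=\sum_{k=1}^N \widetilde a_{jk}$ and $\widetilde\Delta=\operatorname{diag}(\widetilde d_1,\dots,\widetilde d_N)$. Fix a node $q$ such that $\widetilde d_k\neq \widetilde d_q$ for every $k\neq q$. Then for $\zeta$ in a neighbourhood of $0$ the matrix $\widetilde\Delta+\zeta\widetilde A$ has an eigenvalue $\xi_q(\zeta)$ that is analytic in $\zeta$ with $\xi_q(0)=\widetilde d_q$, and its Taylor expansion is $$\xi_q(\zeta)=\widetilde d_q+c_2(q)\zeta^2+c_3(q)\zeta^3+c_4(q)\zeta^4+O(\zeta^5)$$ (i.e. the coefficient of $\zeta$ vanishes), where $$c_2(q)=\sum_{k\neq q}\frac{\widetilde a_{kq}^2}{\widetilde d_q-\widetilde d_k},\qquad c_3(q)=\sum_{r\neq q}\frac{\widetilde a_{rq}}{\widetilde d_q-\widetilde d_r}\sum_{k\neq q}\frac{\widetilde a_{kq}\widetilde a_{kr}}{\widetilde d_q-\widetilde d_k},$$ $$c_4(q)=\sum_{r\neq q}\frac{\widetilde a_{rq}}{\widetilde d_q-\widetilde d_r}\sum_{l\neq q}\frac{\widetilde a_{rl}}{\widetilde d_q-\widetilde d_l}\sum_{k\neq q}\frac{\widetilde a_{kq}\widetilde a_{kl}}{\widetilde d_q-\widetilde d_k}-\sum_{r\neq q}\frac{\widetilde a_{rq}^2}{(\widetilde d_q-\widetilde d_r)^2}\sum_{k\neq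 q}\frac{\widetilde a_{kq}^2}{\widetilde d_q-\widetilde d_k},$$ all sums running over indices in $\{1,\dots,N\}$. In particular, for a simple unweighted graph with zero-one adjacency matrix $A$ and degrees $d_j$, $c_2(q)=\sum_{k\in\mathcal N_q}\frac{1}{d_q-d_k}$ and $c_3(q)=\sum_{r\in\mathcal N_q}\sum_{k\in\mathcal N_q\cap\mathcal N_r}\frac{1}{(d_q-d_r)(d_q-d_k)}$, where $\mathcal N_j$ is the set of neighbours of node $j$.
   Context: $\widetilde A$ is the (weighted) adjacency matrix of an undirected graph without self-loops, $\widetilde d_j$ the strength (weighted degree) of node $j$; the Laplacian is $\widetilde\Delta-\widetilde A$ (the case $\zeta=-1$). The hypothesis says the degree of node $q$ is unique, so $\widetilde d_q$ is a simple eigenvalue of $\widetilde\Delta$. *)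

From HB Require Import structures.
From mathcomp Require Import all_boot all_order all_algebra.
From mathcomp Require Import all_classical all_reals all_analysis.
Set Implicit Arguments. Unset Strict Implicit. Unset Printing Implicit Defensive.
Import Order.TTheory GRing.Theory Num.Theory.
Local Open Scope ring_scope.

Section Defs.
Variables (R : realType) (N : nat).
Implicit Types (A : 'M[R]_N) (q : 'I_N).

Definition strength A (j : 'I_N) : R := \sum_(k < N) A j k.

Definition pert_mx A (z : R) : 'M[R]_N :=
  diag_mx (\row_j strength A j) + z *: A.

Definition c2 A q : R :=
  \sum_(k < N | k != q) (A k q) ^+ 2 / (strength A q - strength A k).

Definition c3 A q : R :=
  \sum_(r < N | r != q) (A r q / (strength A q - strength A r)) *
    \sum_(k < N | k != q) (A k q * A k r / (strength A q - strength A k)).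

Definition c4 A q : R :=
  (\sum_(r < N | r != q) (A r q / (strength A q - strength A r)) *
    \sum_(l < N | l != q) (A r l / (strength A q - strength A l)) *
      \sum_(k < N | k != q) (A k q * A k l / (strength A q - strength A k)))
  - (\sum_(r < N | r != q) (A r q) ^+ 2 / (strength A q - strength A r) ^+ 2) *
    \sum_(k < N | k != q) (A k q) ^+ 2 / (strength A q - strength A k).

End Defs.

From HB Require Import structures.
From mathcomp Require Import all_boot all_order all_algebra.
From mathcomp Require Import all_classical all_reals all_analysis.
From mathcomp Require Import ring lra zify.
Import Order.TTheory GRing.Theory Num.Theory.
Import numFieldNormedType.Exports.
Local Open Scope classical_set_scope.
Local Open Scope ring_scope.
Set Implicit Arguments. Unset Strict Implicit. Unset Printing Implicit Defensive.

(* Rayleigh-Schroedinger perturbation theory, made rigorous with majorants.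
   Normalise the eigenvector by v_q = 1 and write xi = sum_n lam_n z^n and
   v = sum_n v_n z^n with lam_0 = d_q and v_0 = e_q.  Comparing the coefficients
   of z^n in v (Delta + z A) = xi v gives lam_(n+1) = sum_j v_n(j) a_jq and, for
   k <> q, v_(n+1)(k) as a combination of lower-order terms divided by d_q - d_k,
   which is nonzero because d_q is a simple diagonal entry.  The sequence
   K^n / (n+1)^2 is stable under Cauchy products up to the factor 8 / K, so by
   induction |v_n(k)| <= K^n / (n+1)^2 for K large; hence all series converge
   for |z| < 1/K, the Cauchy product of xi and v_k converges to xi v_k, and the
   coefficient identities become the eigen-equation.  Unfolding the recursion
   up to order 4 with a symmetric, zero-diagonal A gives lam_1 = 0 and
   lam_2, lam_3, lam_4 = c2, c3, c4. *)

Section InverseSquares.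
Variable R : realFieldType.

Lemma sum_inv_sqr_le n :
  \sum_(m < n) ((m.+1)%:R ^+ 2 : R)^-1 <= 2 - 2 / (n.+1)%:R.
Proof.
elim: n => [|n IH]; first by rewrite big_ord0 divr1 subrr.
rewrite big_ord_recr /=; apply: le_trans (lerD IH (lexx _)) _.
rewrite -addrA lerD2l -subr_ge0 -[n.+2]addn1 natrD.
have x_gt0 : (0 : R) < n.+1%:R by rewrite ltr0n.
set x : R := n.+1%:R in x_gt0 *.
have -> : - (2 / (x + 1)) - (- (2 / x) + (x ^+ 2)^-1) = (x - 1) / (x ^+ 2 * (x + 1)).
  by field; rewrite ?gt_eqF ?mulf_neq0 ?expf_neq0 ?gt_eqF ?ltr_wpDr.
apply: divr_ge0; first by rewrite subr_ge0 /x ler1n.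
by rewrite mulr_ge0 ?exprn_ge0 ?addr_ge0 ?ltW.
Qed.

Lemma inv_sqr_mul_le (a b : R) : 0 < a -> 0 < b ->
  (a ^+ 2 * b ^+ 2)^-1 <= 2 * ((a ^+ 2)^-1 + (b ^+ 2)^-1) / (a + b) ^+ 2.
Proof.
move=> a_gt0 b_gt0; have ab_gt0 : 0 < a + b by rewrite addr_gt0.
have -> : 2 * ((a ^+ 2)^-1 + (b ^+ 2)^-1) / (a + b) ^+ 2
    = (2 * (a ^+ 2 + b ^+ 2) / (a + b) ^+ 2) * (a ^+ 2 * b ^+ 2)^-1.
  by field; rewrite ?gt_eqF.
apply: ler_peMl; first by rewrite invr_ge0 mulr_ge0 ?exprn_ge0 ?ltW.
rewrite ler_pdivlMr ?exprn_gt0 // mul1r -subr_ge0.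
have -> : 2 * (a ^+ 2 + b ^+ 2) - (a + b) ^+ 2 = (a - b) ^+ 2 by ring.
exact: sqr_ge0.
Qed.

Lemma sum_inv_sqr_conv_le n :
  \sum_(m < n.+1) (((m.+1)%:R : R) ^+ 2 * ((n - m).+1)%:R ^+ 2)^-1
    <= 8 / (n.+2)%:R ^+ 2.
Proof.
have split_term (m : 'I_n.+1) :
    (((m.+1)%:R : R) ^+ 2 * ((n - m).+1)%:R ^+ 2)^-1
    <= 2 / (n.+2)%:R ^+ 2 * (((m.+1)%:R ^+ 2)^-1 + (((n - m).+1)%:R ^+ 2)^-1).
  have -> : (n.+2%:R : R) = (m.+1)%:R + (n - m).+1%:R.
    by rewrite -natrD; congr (_ %:R); have := ltn_ord m; lia.
  by rewrite [X in _ <= X]mulrAC; apply: inv_sqr_mul_le; rewrite ltr0n.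
apply: le_trans (ler_sum _ (fun m _ => split_term m)) _.
rewrite -mulr_sumr big_split /=.
have -> : \sum_(i < n.+1) (((n - i).+1)%:R ^+ 2 : R)^-1
        = \sum_(i < n.+1) ((i.+1)%:R ^+ 2 : R)^-1.
  rewrite (reindex_inj rev_ord_inj) /=; apply: eq_bigr => i _.
  by rewrite subSS subKn // leq_ord.
have sum_le2 : \sum_(i < n.+1) ((i.+1)%:R ^+ 2 : R)^-1 <= 2.
  by apply: le_trans (sum_inv_sqr_le n.+1) _; rewrite lerBlDr lerDl divr_ge0.
apply: le_trans (ler_wpM2l _ (lerD sum_le2 sum_le2)) _.
  by rewrite divr_ge0 ?exprn_ge0.
by rewrite [leLHS](_ : _ = 8 / n.+2%:R ^+ 2) //; ring.
Qed.

End InverseSquares.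

Section Majorant.
Variables (R : realFieldType) (K : R).
Hypothesis K_ge0 : 0 <= K.

Definition majorant n : R := K ^+ n / (n.+1)%:R ^+ 2.

Lemma majorant0 : majorant 0 = 1.
Proof. by rewrite /majorant expr0 expr1n invr1 mulr1. Qed.

Lemma majorant_ge0 n : 0 <= majorant n.
Proof. by rewrite divr_ge0 ?exprn_ge0. Qed.

Lemma majorant_le_expr n : majorant n <= K ^+ n.
Proof.
rewrite ler_pdivrMr ?exprn_gt0 ?ltr0n // ler_peMr ?exprn_ge0 //.
by rewrite exprn_ege1 // ler1n.
Qed.

Lemma majorant_conv_le n :
  K * \sum_(m < n.+1) majorant m * majorant (n - m)%N <= 8 * majorant n.+1.
Proof.
have -> : \sum_(m < n.+1) majorant m * majorant (n - m)%N =
    K ^+ n * \sum_(m < n.+1) (((m.+1)%:R : R) ^+ 2 * ((n - m).+1)%:R ^+ 2)^-1.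
  rewrite mulr_sumr; apply: eq_bigr => m _.
  by rewrite /majorant mulrACA -exprD subnKC ?leq_ord // -invfM.
rewrite /majorant exprS -!mulrA mulrCA.
rewrite [X in _ <= X](_ : _ = K ^+ n * (K * (8 / (n.+2)%:R ^+ 2))); last by ring.
by apply: ler_wpM2l; rewrite ?exprn_ge0 // ler_wpM2l // sum_inv_sqr_conv_le.
Qed.

Lemma majorant_le_succ n : 4 <= K -> majorant n <= majorant n.+1.
Proof.
move=> K_ge4.
have -> : majorant n.+1 = majorant n * (K * (n.+1%:R ^+ 2 / n.+2%:R ^+ 2)).
  by rewrite /majorant exprS; field; rewrite [1 + _]addrC natr1 -natrD !pnatr_eq0.
apply: ler_peMr; first exact: majorant_ge0.
rewrite mulrA ler_pdivlMr ?exprn_gt0 ?ltr0n // mul1r.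
apply: le_trans (ler_wpM2r (exprn_ge0 _ (ler0n _ _)) K_ge4).
by rewrite -!natrX -natrM ler_nat; nia.
Qed.

End Majorant.

Section CauchyProduct.
Variable R : numDomainType.
Implicit Types (a b : R ^nat) (z : R).

Definition power_terms a z : R ^nat := fun n => a n * z ^+ n.

Definition cauchy_prod a b : R ^nat := fun p => \sum_(m < p.+1) a m * b (p - m)%N.

Lemma norm_series_mul_sub_cauchy_prod a b z n :
  `|series (power_terms a z) n.+1 * series (power_terms b z) n.+1
     - series (power_terms (cauchy_prod a b) z) n.+1|
  <= \sum_(i < n) cauchy_prod (fun m => `|a m|) (fun m => `|b m|) (n.+1 + i)
                  * `|z| ^+ (n.+1 + i).
Proof.
set pa := \poly_(i < n.+1) a i; set pb := \poly_(i < n.+1) b i.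
have series_horner c : series (power_terms c z) n.+1 = (\poly_(i < n.+1) c i).[z].
  by rewrite seriesEord horner_poly.
rewrite !series_horner -/pa -/pb -hornerM (@horner_coef_wide _ (n.+1 + n)); last first.
  apply: leq_trans (size_mul_leq _ _) _.
  have := size_poly n.+1 a; have := size_poly n.+1 b; rewrite -/pa -/pb.
  by case: (size pa) => [|sa]; case: (size pb) => [|sb] /=; lia.
rewrite big_split_ord /= horner_poly.
have -> : \sum_(i < n.+1) (pa * pb)`_(lshift n i) * z ^+ lshift n i
        = \sum_(i < n.+1) cauchy_prod a b i * z ^+ i.
  apply: eq_bigr => i _; rewrite coefM /cauchy_prod; congr (_ * _); apply: eq_bigr => j _.
  have i_lt := ltn_ord i; have j_le : (j <= i)%N by rewrite -ltnS.
  by rewrite !coef_poly (leq_ltn_trans j_le) ?(leq_ltn_trans (leq_subr j i)).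
rewrite addrAC subrr add0r; apply: le_trans (ler_norm_sum _ _ _) _.
apply: ler_sum => i _; rewrite normrM normrX ler_wpM2r ?exprn_ge0 //=.
rewrite coefM; apply: le_trans (ler_norm_sum _ _ _) _; apply: ler_sum => j _.
by rewrite normrM !coef_poly ler_pM //; case: ifP; rewrite ?normr0.
Qed.

End CauchyProduct.

Lemma cvgn_series_geometric_bound (R : realType) (u : R ^nat) (B t : R) :
  0 <= t -> t < 1 -> (forall n, `|u n| <= B * t ^+ n) -> cvgn (series u).
Proof.
move=> t_ge0 t_lt1 u_le; have B_ge0 : 0 <= B.
  by have := u_le 0%N; rewrite expr0 mulr1; apply: le_trans.
apply: normed_cvg; apply: (@series_le_cvg R _ (geometric B t)) => //.
- by move=> n; rewrite /= normr_ge0.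
- by move=> n; rewrite /geometric /= mulr_ge0 ?exprn_ge0.
- by apply: is_cvg_geometric_series; rewrite ger0_norm.
Qed.

Lemma cvg_series_head (R : realType) (u : R ^nat) :
  (forall n, u n.+1 = 0) -> series u @ \oo --> u 0%N.
Proof.
move=> u_eq0; rewrite -cvg_shiftS.
suff -> : (fun n => series u n.+1) = (fun=> u 0%N) by apply: cvg_cst.
apply: funext => n; rewrite seriesEord /= big_ord_recl big1 ?addr0 // => i _.
by rewrite lift0 u_eq0.
Qed.

Section CauchyProductMajorant.
Variables (R : realType) (K z : R).
Hypotheses (K_gt0 : 0 < K) (Kz_lt1 : K * `|z| < 1).

Let t := K * `|z|.
Let t_ge0 : 0 <= t. Proof. exact: mulr_ge0 (ltW K_gt0) (normr_ge0 z). Qed.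

Let majorant_coef_ge0 (c : R ^nat) gamma :
  (forall n, `|c n| <= gamma * majorant K n) -> 0 <= gamma.
Proof. by move=> /(_ 0%N); rewrite majorant0 mulr1; apply: le_trans. Qed.

Lemma cvgn_power_series_majorant (a : R ^nat) alpha :
  (forall n, `|a n| <= alpha * majorant K n) -> cvgn (series (power_terms a z)).
Proof.
move=> a_le; apply: (cvgn_series_geometric_bound (B := alpha) t_ge0 Kz_lt1) => n.
rewrite normrM normrX /t exprMn mulrA ler_wpM2r ?exprn_ge0 //.
apply: le_trans (a_le n) _; rewrite ler_wpM2l ?(majorant_coef_ge0 a_le) //.
exact/majorant_le_expr/ltW.
Qed.

Variables (a b : R ^nat) (alpha beta : R).
Hypotheses (a_le : forall n, `|a n| <= alpha * majorant K n)
           (b_le : forall n, `|b n| <= beta * majorant K n).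

Let alpha_ge0 : 0 <= alpha := majorant_coef_ge0 a_le.
Let beta_ge0 : 0 <= beta := majorant_coef_ge0 b_le.

Lemma cauchy_prod_majorant_le p :
  cauchy_prod (fun m => `|a m|) (fun m => `|b m|) p * `|z| ^+ p
    <= 8 * alpha * beta * t ^+ p / p.+2%:R ^+ 2.
Proof.
have cp_le : cauchy_prod (fun m => `|a m|) (fun m => `|b m|) p
    <= alpha * beta * \sum_(m < p.+1) majorant K m * majorant K (p - m)%N.
  rewrite /cauchy_prod mulr_sumr; apply: ler_sum => m _.
  by rewrite mulrACA; apply: ler_pM.
have sum_le : \sum_(m < p.+1) majorant K m * majorant K (p - m)%N
    <= 8 * majorant K p.+1 / K.
  by rewrite ler_pdivlMr // mulrC majorant_conv_le // ltW.
apply: le_trans (ler_wpM2r (exprn_ge0 _ (normr_ge0 z)) cp_le) _.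
apply: le_trans (ler_wpM2r (exprn_ge0 _ (normr_ge0 z))
                   (ler_wpM2l (mulr_ge0 alpha_ge0 beta_ge0) sum_le)) _.
rewrite [leLHS](_ : _ = 8 * alpha * beta * t ^+ p / p.+2%:R ^+ 2) //.
by rewrite /majorant /t exprMn exprS; field; rewrite -natrD pnatr_eq0 /= gt_eqF.
Qed.

Lemma cvg_series_cauchy_prod :
  series (power_terms (cauchy_prod a b) z) @ \oo -->
    limn (series (power_terms a z)) * limn (series (power_terms b z)).
Proof.
set P := series (power_terms a z); set Q := series (power_terms b z).
set C := series (power_terms (cauchy_prod a b) z).
set c := 8 * alpha * beta.
have c_ge0 : 0 <= c by rewrite !mulr_ge0.
have gap_le n : `|P n.+1 * Q n.+1 - C n.+1| <= c * t ^+ n.+1.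
  apply: le_trans (norm_series_mul_sub_cauchy_prod a b z n) _.
  apply: le_trans (_ : \sum_(i < n) c * t ^+ n.+1 / n.+1%:R <= _).
    apply: ler_sum => i _; apply: le_trans (cauchy_prod_majorant_le _) _.
    apply: ler_pM; rewrite ?mulr_ge0 ?invr_ge0 ?exprn_ge0 //.
      by rewrite ler_wpM2l // ler_wiXn2l ?leq_addr // ltW.
    rewrite lef_pV2 ?posrE ?exprn_gt0 ?ltr0n //.
    by rewrite -natrX ler_nat; nia.
  rewrite sumr_const card_ord -mulrnAr.
  apply: ler_piMr; first by rewrite mulr_ge0 ?exprn_ge0.
  by rewrite -mulr_natr mulrC ler_pdivrMr ?ltr0n // mul1r ler_nat.
have gap_cvg0 : (fun n => P n.+1 * Q n.+1 - C n.+1) @ \oo --> 0.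
  apply/norm_cvg0P.
  apply: (squeeze_cvgr _ (cvg_cst 0) (_ : geometric (c * t) t @ \oo --> 0)).
    by apply: nearW => n; rewrite normr_ge0 /geometric /= -mulrA -exprS gap_le.
  by apply: cvg_geometric; rewrite ger0_norm.
have PQ_cvg : (fun n => P n.+1 * Q n.+1) @ \oo --> limn P * limn Q.
  by apply: cvgM; rewrite cvg_shiftS; apply/cvgn_power_series_majorant.
rewrite -cvg_shiftS; rewrite -[_ * _]subr0.
have -> : (fun n => C n.+1) = (fun n => P n.+1 * Q n.+1 - (P n.+1 * Q n.+1 - C n.+1)).
  by apply: funext => n; rewrite subKr.
exact: cvgB PQ_cvg gap_cvg0.
Qed.

End CauchyProductMajorant.

Section PerturbationCoefficients.
Variables (R : realType) (N : nat) (A : 'M[R]_N) (q : 'I_N).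
Local Notation d := (strength A).

Definition reduced_resolvent (k : 'I_N) : R :=
  if k == q then 0 else (d q - d k)^-1.

(* [eigvec_coef_upto n m] is [eigvec_coef m] for [m <= n]: the table of all
   lower-order vectors needed by the course-of-values recursion. *)
Fixpoint eigvec_coef_upto (n : nat) : nat -> 'I_N -> R :=
  if n is n'.+1 then
    let v := eigvec_coef_upto n' in
    fun m => if m == n then
      fun k => reduced_resolvent k * (\sum_j v n' j * A j k
                 - \sum_(m < n') (\sum_j v m j * A j q) * v (n' - m)%N k)
    else v m
  else fun _ k => (k == q)%:R.

Definition eigvec_coef n : 'I_N -> R := eigvec_coef_upto n n.

Definition eigval_coef n : R :=
  if n is n'.+1 then \sum_j eigvec_coef n' j * A j q else d q.

Lemma eigvec_coef_uptoE n m : (m <= n)%N -> eigvec_coef_upto n m = eigvec_coef m.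
Proof.
elim: n => [|n IH]; first by rewrite leqn0 => /eqP ->.
by rewrite leq_eqVlt => /predU1P[-> //|m_lt]; rewrite /= ltn_eqF // IH.
Qed.

Lemma eigvec_coef0 k : eigvec_coef 0 k = (k == q)%:R.
Proof. by []. Qed.

Lemma eigvec_coefS n k :
  eigvec_coef n.+1 k = reduced_resolvent k * (\sum_j eigvec_coef n j * A j k
    - \sum_(m < n) eigval_coef m.+1 * eigvec_coef (n - m)%N k).
Proof.
rewrite /eigvec_coef /= eqxx (eigvec_coef_uptoE (leqnn n)); congr (_ * (_ - _)).
apply: eq_bigr => m _; rewrite (eigvec_coef_uptoE (leq_subr m n)).
by rewrite /eigval_coef; under eq_bigr do rewrite (eigvec_coef_uptoE (ltnW (ltn_ord m))).
Qed.

Lemma eigvec_coef_at n : eigvec_coef n q = (n == 0%N)%:R.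
Proof.
by case: n => [|n]; rewrite ?eigvec_coef0 ?eigvec_coefS /reduced_resolvent eqxx ?mul0r.
Qed.

Definition col_abs_sum (j : 'I_N) : R := \sum_i `|A i j|.

(* [8] closes the induction in [eigvec_coef_bound] through [majorant_conv_le];
   [4] makes [majorant] nondecreasing, which is used for [eigval_coef_bound]. *)
Definition majorant_rate : R :=
  8 * \sum_k `|reduced_resolvent k| * (col_abs_sum k + col_abs_sum q) + 4.

Lemma col_abs_sum_ge0 j : 0 <= col_abs_sum j.
Proof. exact: sumr_ge0. Qed.

Lemma majorant_rate_ge4 : 4 <= majorant_rate.
Proof.
rewrite lerDr mulr_ge0 // sumr_ge0 // => k _.
by rewrite mulr_ge0 ?addr_ge0 ?col_abs_sum_ge0.
Qed.

Lemma majorant_rate_gt0 : 0 < majorant_rate.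
Proof. exact: lt_le_trans majorant_rate_ge4. Qed.

Local Notation K := majorant_rate.
Let K_ge0 : 0 <= K := ltW majorant_rate_gt0.

Lemma norm_sum_mul_col_le (f : 'I_N -> R) c k :
  (forall j, `|f j| <= c) -> `|\sum_j f j * A j k| <= c * col_abs_sum k.
Proof.
move=> f_le; apply: le_trans (ler_norm_sum _ _ _) _.
rewrite /col_abs_sum mulr_sumr; apply: ler_sum => j _.
by rewrite normrM ler_wpM2r.
Qed.

Lemma eigvec_coef_bound n k : `|eigvec_coef n k| <= majorant K n.
Proof.
elim/ltn_ind: n k => -[|n] IH k.
  by rewrite eigvec_coef0 majorant0; case: (k == q); rewrite ?normr1 ?normr0.
set M := \sum_(m < n.+1) majorant K m * majorant K (n - m)%N.
have M_ge0 : 0 <= M by rewrite sumr_ge0 // => m _; rewrite mulr_ge0 ?majorant_ge0.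
have inner_le : `|\sum_j eigvec_coef n j * A j k
      - \sum_(m < n) eigval_coef m.+1 * eigvec_coef (n - m)%N k|
    <= (col_abs_sum k + col_abs_sum q) * M.
  set M' := \sum_(m < n) majorant K m * majorant K (n - m)%N; have M'_ge0 : 0 <= M'.
    by rewrite sumr_ge0 // => m _; rewrite mulr_ge0 ?majorant_ge0.
  have -> : M = M' + majorant K n.
    by rewrite /M big_ord_recr subnn majorant0 mulr1.
  have head_le := norm_sum_mul_col_le k (IH n (ltnSn n)).
  have tail_le : `|\sum_(m < n) eigval_coef m.+1 * eigvec_coef (n - m)%N k|
      <= col_abs_sum q * M'.
    apply: le_trans (ler_norm_sum _ _ _) _; rewrite /M' mulr_sumr.
    apply: ler_sum => m _; rewrite normrM mulrA [col_abs_sum q * _]mulrC.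
    apply: ler_pM; rewrite ?normr_ge0 ?IH ?ltnS ?leq_subr //.
    by apply: norm_sum_mul_col_le => j; apply: IH; rewrite ltnS ltnW.
  apply: le_trans (ler_normB _ _) _; apply: le_trans (lerD head_le tail_le) _.
  have := col_abs_sum_ge0 k; have := col_abs_sum_ge0 q; have := majorant_ge0 K_ge0 n.
  nra.
have rate_le : 8 * (`|reduced_resolvent k| * (col_abs_sum k + col_abs_sum q)) <= K.
  rewrite /majorant_rate ler_wpDr // ler_wpM2l // (bigD1 k) //= lerDl.
  by rewrite sumr_ge0 // => j _; rewrite mulr_ge0 ?addr_ge0 ?col_abs_sum_ge0.
rewrite -(ler_pM2l (_ : (0 : R) < 8)) //; apply: le_trans (majorant_conv_le K_ge0 n).
rewrite eigvec_coefS normrM -/M; apply: le_trans (ler_wpM2r M_ge0 rate_le).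
by rewrite -mulrA ler_wpM2l // -mulrA ler_wpM2l.
Qed.

Lemma eigval_coef_bound n :
  `|eigval_coef n| <= (`|d q| + col_abs_sum q) * majorant K n.
Proof.
case: n => [|n]; first by rewrite majorant0 mulr1 lerDl col_abs_sum_ge0.
apply: le_trans (norm_sum_mul_col_le q (eigvec_coef_bound n)) _.
rewrite mulrC; apply: ler_pM; rewrite ?col_abs_sum_ge0 ?majorant_ge0 //.
  by rewrite lerDr.
exact: majorant_le_succ majorant_rate_ge4.
Qed.

Hypothesis d_uniq : forall k, k != q -> d k != d q.

Lemma reduced_resolventK k : k != q -> (d q - d k) * reduced_resolvent k = 1.
Proof.
by move=> kq; rewrite /reduced_resolvent (negbTE kq) mulfV // subr_eq0 eq_sym d_uniq.
Qed.

Lemma cauchy_prod_eigen_coef k n :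
  cauchy_prod eigval_coef (eigvec_coef^~ k) n
    = d k * eigvec_coef n k
      + (if n is n'.+1 then \sum_j eigvec_coef n' j * A j k else 0).
Proof.
rewrite /cauchy_prod big_ord_recl subn0; case: n => [|n].
  by rewrite big_ord0 !addr0 eigvec_coef0; case: eqP => [->|]; rewrite ?mulr0 ?mulr1.
under eq_bigr do rewrite lift0 subSS.
rewrite big_ord_recr /= subnn; have [->|kq] := eqVneq k q.
  rewrite !eigvec_coef_at mulr0 mulr1 add0r big1 ?add0r // => i _.
  by rewrite eigvec_coef_at subn_eq0 leqNgt ltn_ord mulr0.
rewrite eigvec_coef0 (negbTE kq) mulr0 addr0.
have := congr1 (fun x => (d q - d k) * x) (eigvec_coefS n k).
rewrite /= mulrA reduced_resolventK // mul1r => /esym/eqP; rewrite subr_eq => /eqP ->.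
ring.
Qed.

Definition eigval_series (z : R) : R := limn (series (power_terms eigval_coef z)).
Definition eigvec_series (z : R) (k : 'I_N) : R :=
  limn (series (power_terms (eigvec_coef^~ k) z)).

Lemma eigvec_series_at z : eigvec_series z q = 1.
Proof.
have -> : 1 = power_terms (eigvec_coef^~ q) z 0 by rewrite /power_terms eigvec_coef_at mulr1.
apply: cvg_lim => //; apply: cvg_series_head => n.
by rewrite /power_terms eigvec_coef_at mul0r.
Qed.

Lemma eigval_series0 : eigval_series 0 = d q.
Proof.
have -> : d q = power_terms eigval_coef 0 0 by rewrite /power_terms mulr1.
apply: cvg_lim => //; apply: cvg_series_head => n.
by rewrite /power_terms expr0n mulr0.
Qed.

Section Convergent.
Variable z : R.
Hypothesis Kz_lt1 : K * `|z| < 1.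

Let eigvec_coef_bound1 k n : `|eigvec_coef n k| <= 1 * majorant K n.
Proof. by rewrite mul1r eigvec_coef_bound. Qed.

Lemma cvg_eigval_series : series (power_terms eigval_coef z) @ \oo --> eigval_series z.
Proof.
exact/(cvgn_power_series_majorant majorant_rate_gt0 Kz_lt1 eigval_coef_bound).
Qed.

Lemma cvg_eigvec_series k :
  series (power_terms (eigvec_coef^~ k) z) @ \oo --> eigvec_series z k.
Proof.
exact/(cvgn_power_series_majorant majorant_rate_gt0 Kz_lt1 (eigvec_coef_bound1 k)).
Qed.

Lemma eigen_equation k :
  eigval_series z * eigvec_series z k
    = d k * eigvec_series z k + z * \sum_j eigvec_series z j * A j k.
Proof.
have := cvg_series_cauchy_prod majorant_rate_gt0 Kz_lt1
          eigval_coef_bound (eigvec_coef_bound1 k).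
rewrite -cvg_shiftS => /cvg_unique; apply => //=.
have partial_sumE n :
    series (power_terms (cauchy_prod eigval_coef (eigvec_coef^~ k)) z) n.+1
    = d k * series (power_terms (eigvec_coef^~ k) z) n.+1
      + z * \sum_j series (power_terms (eigvec_coef^~ j) z) n * A j k.
  rewrite !seriesEord /=; under eq_bigr do rewrite /power_terms cauchy_prod_eigen_coef mulrDl.
  rewrite big_split /= mulr_sumr; congr (_ + _).
    by apply: eq_bigr => i _; rewrite mulrA.
  rewrite big_ord_recl /= mul0r add0r mulr_sumr.
  under [RHS]eq_bigr do rewrite seriesEord /= mulr_suml mulr_sumr.
  rewrite exchange_big; apply: eq_bigr => i _; rewrite mulr_suml; apply: eq_bigr => j _.
  by rewrite /power_terms add0n exprS; ring.
under eq_cvg do rewrite partial_sumE.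
apply: cvgD; first by apply: cvgMl_tmp; rewrite cvg_shiftS; apply: cvg_eigvec_series.
apply: cvgMl_tmp; apply: cvg_big => // [|j _]; first exact: add_continuous.
by apply: cvgMr_tmp; apply: cvg_eigvec_series.
Qed.

Lemma eigenvalue_pert_mx : eigenvalue (pert_mx A z) (eigval_series z).
Proof.
apply/eigenvalueP; exists (\row_k eigvec_series z k); last first.
  by apply/negP => /eqP /rowP /(_ q) /eqP; rewrite !mxE eigvec_series_at oner_eq0.
apply/rowP => k; rewrite /pert_mx mulmxDr -scalemxAr mul_mx_diag !mxE eigen_equation.
by congr (_ + _); [rewrite mulrC | congr (_ * _); apply: eq_bigr => j _; rewrite !mxE].
Qed.

End Convergent.

End PerturbationCoefficients.

Section LowOrderCoefficients.
Variables (R : realType) (N : nat) (A : 'M[R]_N) (q : 'I_N).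
Hypotheses (A_sym : A^T = A) (A_diag0 : forall j, A j j = 0).
Local Notation d := (strength A).
Local Notation g := (reduced_resolvent A q).
Local Notation v := (eigvec_coef A q).
Local Notation lam := (eigval_coef A q).

Lemma A_symE i j : A i j = A j i.
Proof. by rewrite -[in LHS]A_sym mxE. Qed.

Lemma sum_neq_resolventE (F : 'I_N -> R -> R) : (forall k, F k 0 = 0) ->
  \sum_(k < N | k != q) F k (d q - d k)^-1 = \sum_k F k (g k).
Proof.
move=> F0; rewrite big_mkcond; apply: eq_bigr => k _.
by rewrite /reduced_resolvent; case: eqP => [->|].
Qed.

Lemma c2E : c2 A q = \sum_k A k q ^+ 2 * g k.
Proof.
by rewrite /c2 (sum_neq_resolventE (F := fun k x => A k q ^+ 2 * x)) // => k; rewrite mulr0.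
Qed.

Lemma c3E : c3 A q = \sum_r A r q * g r * \sum_k A k q * A k r * g k.
Proof.
rewrite /c3 (sum_neq_resolventE (F := fun r x => A r q * x * _)) => [|r]; last first.
  by rewrite mulr0 mul0r.
apply: eq_bigr => r _.
by rewrite (sum_neq_resolventE (F := fun k x => A k q * A k r * x)) // => k; rewrite mulr0.
Qed.

Lemma c4E : c4 A q =
  \sum_r A r q * g r * \sum_l A r l * g l * \sum_k A k q * A k l * g k
  - (\sum_r A r q ^+ 2 * g r ^+ 2) * \sum_k A k q ^+ 2 * g k.
Proof.
rewrite /c4 -c2E; congr (_ - _ * _); last first.
  under eq_bigr do rewrite -exprVn.
  rewrite (sum_neq_resolventE (F := fun r x => A r q ^+ 2 * x ^+ 2)) // => r.
  by rewrite expr0n mulr0.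
rewrite (sum_neq_resolventE (F := fun r x => A r q * x * _)) => [|r]; last first.
  by rewrite mulr0 mul0r.
apply: eq_bigr => r _; congr (_ * _).
rewrite (sum_neq_resolventE (F := fun l x => A r l * x * _)) => [|l]; last first.
  by rewrite mulr0 mul0r.
apply: eq_bigr => l _.
by rewrite (sum_neq_resolventE (F := fun k x => A k q * A k l * x)) // => k; rewrite mulr0.
Qed.

Lemma eigval_coef1 : lam 1 = 0.
Proof.
rewrite /eigval_coef (bigD1 q) //= eigvec_coef0 eqxx mul1r A_diag0 add0r.
by rewrite big1 // => j /negbTE jq; rewrite eigvec_coef0 jq mul0r.
Qed.

Lemma eigvec_coef1 k : v 1 k = g k * A q k.
Proof.
rewrite eigvec_coefS big_ord0 subr0 (bigD1 q) //= eigvec_coef0 eqxx mul1r.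
by rewrite big1 ?addr0 // => j /negbTE jq; rewrite eigvec_coef0 jq mul0r.
Qed.

Lemma eigvec_coef2 k : v 2 k = g k * \sum_j g j * A q j * A j k.
Proof.
rewrite eigvec_coefS big_ord1 eigval_coef1 mul0r subr0; congr (_ * _).
by apply: eq_bigr => j _; rewrite eigvec_coef1.
Qed.

Lemma eigvec_coef3 k :
  v 3 k = g k * (\sum_j v 2 j * A j k - lam 2 * (g k * A q k)).
Proof.
by rewrite eigvec_coefS big_ord_recl big_ord1 eigval_coef1 mul0r add0r eigvec_coef1.
Qed.

Lemma eigval_coef2 : lam 2 = c2 A q.
Proof. by rewrite c2E; apply: eq_bigr => k _; rewrite eigvec_coef1 A_symE; ring. Qed.

Lemma eigval_coef3 : lam 3 = c3 A q.
Proof.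
rewrite c3E; apply: eq_bigr => r _; rewrite eigvec_coef2 !mulr_sumr mulr_suml.
by apply: eq_bigr => k _; rewrite (A_symE q k); ring.
Qed.

Lemma eigval_coef4 : lam 4 = c4 A q.
Proof.
rewrite [LHS]/eigval_coef c4E -c2E -eigval_coef2.
under eq_bigr do rewrite eigvec_coef3 mulrBr mulrBl.
rewrite sumrB; congr (_ - _).
  apply: eq_bigr => r _.
  have inner l : v 2 l * A l r = A r l * g l * \sum_k A k q * A k l * g k.
    rewrite eigvec_coef2 (A_symE l r) (eq_bigr (fun k => A k q * A k l * g k)); first ring.
    by move=> k _; rewrite (A_symE q k); ring.
  by under eq_bigr do rewrite inner; ring.
by rewrite mulrC mulr_sumr; apply: eq_bigr => r _; rewrite (A_symE q r); ring.
Qed.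

Hypothesis A01 : forall i j, A i j = 0 \/ A i j = 1.

Lemma c2_unweighted :
  c2 A q = \sum_(k < N | A q k == 1) (d q - d k)^-1.
Proof.
rewrite /c2 big_mkcond [RHS]big_mkcond; apply: eq_bigr => k _.
have [->|kq] := eqVneq k q; first by rewrite A_diag0 /= (eq_sym 0) oner_eq0.
rewrite /= A_symE; case: (A01 q k) => ->; last by rewrite eqxx expr1n mul1r.
by rewrite (eq_sym 0) oner_eq0 expr0n /= mul0r.
Qed.

Lemma c3_unweighted :
  c3 A q = \sum_(r < N | A q r == 1) \sum_(k < N | (A q k == 1) && (A r k == 1))
             ((d q - d r) * (d q - d k))^-1.
Proof.
rewrite /c3 big_mkcond [RHS]big_mkcond; apply: eq_bigr => r _.
have [->|rq] := eqVneq r q; first by rewrite A_diag0 /= (eq_sym 0) oner_eq0.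
rewrite /= A_symE; case: (A01 q r) => ->; first by rewrite (eq_sym 0) oner_eq0 /= !mul0r.
rewrite eqxx mul1r mulr_sumr big_mkcond [RHS]big_mkcond; apply: eq_bigr => k _.
have [->|kq] := eqVneq k q; first by rewrite A_diag0 /= (eq_sym 0) oner_eq0.
rewrite /= (A_symE k q) (A_symE k r).
case: (A01 q k) => ->; first by rewrite (eq_sym 0) oner_eq0 /= !mul0r mulr0.
case: (A01 r k) => ->; first by rewrite (eq_sym 0) oner_eq0 eqxx /= mulr0 mul0r mulr0.
by rewrite eqxx /= !mul1r invfM.
Qed.

End LowOrderCoefficients.

Theorem mainTheorem1 (R : realType) (N : nat) (A : 'M[R]_N) (q : 'I_N)
  (hsym : A^T = A)
  (hnneg : forall i j, 0 <= A i j)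
  (hdiag : forall j, A j j = 0)
  (huniq : forall k, k != q -> strength A k != strength A q) :
  (exists (xi : R -> R) (a : nat -> R) (rho : R),
     0 < rho /\
     (forall z : R, `|z| < rho ->
        eigenvalue (pert_mx A z) (xi z) /\
        series (fun n => a n * z ^+ n) @ \oo --> xi z) /\
     xi 0 = strength A q /\
     a 0%N = strength A q /\ a 1%N = 0 /\
     a 2%N = c2 A q /\ a 3%N = c3 A q /\ a 4%N = c4 A q) /\
  ((forall i j, A i j = 0 \/ A i j = 1) ->
     c2 A q = \sum_(k < N | A q k == 1) (strength A q - strength A k)^-1 /\
     c3 A q = \sum_(r < N | A q r == 1)
                \sum_(k < N | (A q k == 1) && (A r k == 1))
                  ((strength A q - strength A r) * (strength A q - strength A k))^-1).
Proof.
split; last by move=> A01; split; [exact: c2_unweighted | exact: c3_unweighted].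
have K_gt0 := majorant_rate_gt0 A q.
exists (eigval_series A q), (eigval_coef A q), (majorant_rate A q)^-1.
split; first by rewrite invr_gt0.
split.
  move=> z z_lt.
  have Kz_lt1 : majorant_rate A q * `|z| < 1 by rewrite mulrC -ltr_pdivlMr // div1r.
  by split; [exact: eigenvalue_pert_mx | exact: cvg_eigval_series].
split; first exact: eigval_series0.
split; first by [].
split; first exact: eigval_coef1.
split; first exact: eigval_coef2.
split; first exact: eigval_coef3.
exact: eigval_coef4.
Qed.
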